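(* Let $A=\mathbb{F}_q[t]$ and let $f_1,\ldots,f_r,g\in A$ be non-constant. The number of polynomial functions from $A/f_1A\times\cdots\times A/f_rA$ to $A/gA$ is $$N(f_1,\ldots,f_r;g)=\prod_{\mathbf{k}}q^{\deg\frac{g}{\gcd\left(g,\prod_{i=1}^r\prod_{j=0}^{k_i-1}(a_{k_i}-a_j)\right)}},$$ where the product is over all $\mathbf{k}=(k_1,\ldots,k_r)\in\mathbb{N}^r$ with $0\le k_i<\mu(f_i,g)$ for each $1\le i\le r$.
   Context: Write $\mathbb{F}_q=\{a_0=0,a_1,\ldots,a_{q-1}\}$. For $k\in\mathbb{N}$ with base-$q$ expansion $k=c_0+c_1q+\cdots+c_hq^h$ ($0\le c_s<q$), define $a_k=a_{c_0}+a_{c_1}t+\cdots+a_{c_h}t^h\in A$. Thus $\{a_0,\ldots,a_{q^d-1}\}$ is the set of polynomials of degree $<d$. For each $i$, $A/f_iA$ is identified with the complete residue system of polynomials of degree $<\deg f_i$. A function $f$ from $A/f_1A\times\cdots\times A/f_rA$ to $A/gA$ is a polynomial function if there is $F\in A[x_1,\ldots,x_r]$ with $F(b_1,\ldots,b_r)\equiv f(b_1,\ldots,b_r)\pmod g$ for all $(b_1,\ldots,b_r)$ with $\deg b_i<\deg f_i$ for each $i$. $\lambda(g)$ is the smallest positive integer $k$ such that $g\mid\prod_{j=0}^{k-1}(a_k-a_j)$, and $\mu(f_i,g)=\min(q^{\deg f_i},\lambda(g))$. *)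

(* A = F_q[t] is {poly F} for F : finFieldType, q = #|F|. *)
From HB Require Import structures.
From mathcomp Require Import all_boot all_order all_algebra.
Set Implicit Arguments. Unset Strict Implicit. Unset Printing Implicit Defensive.
Import Order.TTheory GRing.Theory Num.Theory.
Local Open Scope ring_scope.

Section Defs.
Variable F : finFieldType.
Local Notation q := #|F|.

(* An enumeration a_0 = 0, a_1, ..., a_{q-1} of F_q, given as a sequence s. *)
Definition good_enum (s : seq F) : Prop :=
  [/\ size s = q, uniq s & s`_0 = 0].

(* a_k = sum_i a_{c_i} t^i where k = sum_i c_i q^i (base-q digits).
   Since k < q^(k+1), digits beyond index k are 0 and a_0 = 0. *)
Definition aq (s : seq F) (k : nat) : {poly F} :=
  \sum_(i < k.+1) (s`_((k %/ q ^ i) %% q))%:P * 'X^i.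

Definition fallprod (s : seq F) (k : nat) : {poly F} :=
  \prod_(j < k) (aq s k - aq s j).

Definition lam_prop (s : seq F) (g : {poly F}) (k : nat) : bool :=
  (0 < k)%N && (g %| fallprod s k).

(* lambda(g): the smallest positive k with g | prod_{j<k}(a_k - a_j).
   Such k exists and is <= q^(deg g) (take k = q^(deg g), a_k = t^(deg g));
   we search in 1 .. q^(size g), which contains it. *)
Definition lambda (s : seq F) (g : {poly F}) : nat :=
  (find (lam_prop s g) (iota 1 (q ^ size g))).+1.

Definition mu (s : seq F) (f g : {poly F}) : nat :=
  minn (q ^ (size f).-1) (lambda s g).

(* Multivariate polynomials in A[x_1..x_r], as finite lists of monomials
   (exponent vector, coefficient in A), and their evaluation. *)
Definition mpoly (r : nat) := seq ({ffun 'I_r -> nat} * {poly F}).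

Definition meval (r : nat) (P : mpoly r) (b : 'I_r -> {poly F}) : {poly F} :=
  \sum_(m <- P) m.2 * \prod_(i < r) b i ^+ m.1 i.

(* Points of A/f_1A x ... x A/f_rA: r-tuples of residues b_i with deg b_i < deg f_i,
   each b_i stored by its coefficient vector of a common length mx. *)
Definition mx (r : nat) (f : 'I_r -> {poly F}) : nat := \max_(i < r) size (f i).

Definition in_dom (r : nat) (f : 'I_r -> {poly F}) (b : {ffun 'I_r -> (mx f).-tuple F}) : bool :=
  [forall i, (size (Poly (b i)) < size (f i))%N].

Definition Dom (r : nat) (f : 'I_r -> {poly F}) := {b | @in_dom r f b}.

Definition dpt (r : nat) (f : 'I_r -> {poly F}) (x : Dom f) : 'I_r -> {poly F} :=
  fun i => Poly (val x i).

(* Elements of A/gA: residues of degree < deg g, by their coefficient vectors. *)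
Definition Cod (g : {poly F}) := ((size g).-1).-tuple F.

Definition FunT (r : nat) (f : 'I_r -> {poly F}) (g : {poly F}) :=
  {ffun Dom f -> Cod g}.

Definition is_polyfun (r : nat) (f : 'I_r -> {poly F}) (g : {poly F})
  (h : FunT f g) : Prop :=
  exists P : mpoly r, forall x : Dom f, Poly (h x) = meval P (dpt x) %% g.

End Defs.

Definition card_is (T : eqType) (P : T -> Prop) (n : nat) : Prop :=
  exists s : seq T, [/\ uniq s, (forall x, x \in s <-> P x) & size s = n].

(* The products [falling_n x = \prod_(j < n) (x - a_j)] form a Newton basis of
   A[x], so polynomial functions are the maps x |-> \sum_k c_k \prod_i
   falling_(k_i) (x_i) mod g.  Counting the a_j in residue classes (as in
   Bhargava's p-orderings) shows that d_k = \prod_i fallprod (k_i) divides every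
   value of the k-th basis product; hence only c_k mod g / gcd(g, d_k) matters,
   and the products with some k_i >= mu(f_i, g) vanish on the domain mod g.
   Evaluating at the points (a_(k_i))_i is triangular with diagonal entries d_k,
   so these reduced representations are unique, and counting them gives the
   product formula. *)

From HB Require Import structures.
From mathcomp Require Import all_boot all_order all_algebra.
From mathcomp Require Import ring.
From Stdlib Require Import Classical.
Import GRing.Theory.
Local Open Scope ring_scope.

Set Implicit Arguments. Unset Strict Implicit. Unset Printing Implicit Defensive.

Lemma sum_nat_blocks (t : nat -> nat) Q N :
  (\sum_(j < Q * N) t j = \sum_(Q' < Q) \sum_(R < N) t (Q' * N + R))%N.
Proof.
elim: Q => [|Q IH]; first by rewrite mul0n !big_ord0.
by rewrite mulSnr big_split_ord /= IH big_ord_recr.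
Qed.

Lemma sum_indicator_leq (v E : nat) :
  (v < E)%N -> (\sum_(1 <= e < E) (e <= v : nat))%N = v.
Proof.
move=> ltvE; rewrite (@big_cat_nat _ _ _ v.+1) //=.
rewrite [X in (_ + X)%N]big_nat_cond [X in (_ + X)%N]big1; last first.
  by move=> e /andP[/andP[lt_v_e _] _]; rewrite leqNgt lt_v_e.
rewrite addn0 big_nat_cond (eq_bigr (fun _ => 1%N)); last first.
  by move=> e /andP[/andP[_ lt_e_v] _]; rewrite -ltnS lt_e_v.
by rewrite -big_nat_cond sum_nat_const_nat subn1 muln1.
Qed.

Lemma sum_nat_lt (I : finType) (u v : I -> nat) i0 :
  (forall i, u i <= v i)%N -> (u i0 < v i0)%N -> (\sum_i u i < \sum_i v i)%N.
Proof.
move=> le_uv lt_uv0; rewrite (bigD1 i0) //= [X in (_ < X)%N](bigD1 i0) //=.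
by rewrite -addSn leq_add // leq_sum.
Qed.

Lemma modp_eq_dvdp (F : fieldType) (d x y : {poly F}) : d %| x - y -> x %% d = y %% d.
Proof. by move/modp_eq0; rewrite modpD modpN => /eqP; rewrite subr_eq0 => /eqP. Qed.

Section Valuation.
Variable F : fieldType.
Implicit Types p x y u w : {poly F}.

(* For [1 < size p] and [x != 0], [p ^+ e %| x] forces [e < size x], so this
   counts the [e] in [1 .. v], [v] being the multiplicity of [p] in [x]. *)
Definition valp p x : nat := (\sum_(1 <= e < size x) ((p ^+ e %| x)%R : nat))%N.

Lemma size_exp_mul_gt p y n : (1 < size p)%N -> y != 0 -> (n < size (p ^+ n * y)%R)%N.
Proof.
move=> size_p y0; have p0 : p != 0 by rewrite -size_poly_gt0 ltnW.
have size_pn : size (p ^+ n) = ((size p).-1 * n).+1.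
  by rewrite -size_exp prednK // size_poly_gt0 expf_neq0.
have le_n : (n <= (size p).-1 * n)%N by rewrite leq_pmull // -ltnS prednK // ltnW.
rewrite size_mul ?expf_neq0 // size_pn addSn -addn1.
by apply: leq_add le_n _; rewrite size_poly_gt0.
Qed.

Lemma dvdp_exp_exp_mul p y n e : p != 0 -> ~~ (p %| y) ->
  (p ^+ e %| p ^+ n * y) = (e <= n)%N.
Proof.
move=> p0 npy; case: (leqP e n) => le_en; first by rewrite dvdp_mulr // dvdp_exp2l.
apply/negP; rewrite -(subnKC (ltnW le_en)) exprD dvdp_mul2l ?expf_neq0 // => dvd_e.
move/negP: npy; apply; apply: (dvdp_trans _ dvd_e).
by apply: dvdp_exp; rewrite ?subn_gt0 ?dvdpp.
Qed.

Lemma valp_exp_mul p y n : (1 < size p)%N -> ~~ (p %| y) -> valp p (p ^+ n * y) = n.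
Proof.
move=> size_p npy; have p0 : p != 0 by rewrite -size_poly_gt0 ltnW.
have y0 : y != 0 by apply: contraNneq npy => ->; rewrite dvdp0.
rewrite /valp (eq_bigr (fun e => (e <= n : nat))) => [|e _]; last first.
  by rewrite dvdp_exp_exp_mul.
by rewrite sum_indicator_leq // size_exp_mul_gt.
Qed.

Lemma size_divp_lt x p : x != 0 -> (1 < size p)%N -> (size (x %/ p)%R < size x)%N.
Proof.
move=> x0 size_p; have p_pos : (0 < size p)%N by rewrite ltnW.
rewrite size_divp; last by rewrite -size_poly_gt0.
rewrite ltn_subrL size_poly_gt0 x0 andbT.
by rewrite -ltnS prednK.
Qed.

Lemma exp_mul_decomp p x : (1 < size p)%N -> x != 0 ->
  exists n, exists2 y, x = p ^+ n * y & ~~ (p %| y).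
Proof.
move=> size_p; have p0 : p != 0 by rewrite -size_poly_gt0 ltnW.
elim: {x}(size x) {-2}x (leqnn (size x)) => [|k IH] x size_x x0.
  by move: size_x; rewrite leqn0 size_poly_eq0 (negPf x0).
have [px|npx] := boolP (p %| x); last by exists 0%N, x; rewrite ?expr0 ?mul1r.
have ex := divpK px; set x' := x %/ p in ex.
have x'0 : x' != 0 by apply: contraNneq x0 => x'_0; rewrite -ex x'_0 mul0r.
have [|n [y ey npy]] := IH x' _ x'0.
  by rewrite -ltnS (leq_trans _ size_x) // size_divp_lt.
by exists n.+1, y; rewrite // -ex ey exprSr mulrAC.
Qed.

Lemma dvdp_exp_valp p x n : (1 < size p)%N -> x != 0 ->
  (p ^+ n %| x) = (n <= valp p x)%N.
Proof.
move=> size_p x0; have p0 : p != 0 by rewrite -size_poly_gt0 ltnW.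
have [v [y -> npy]] := exp_mul_decomp size_p x0.
by rewrite valp_exp_mul // dvdp_exp_exp_mul.
Qed.

Lemma valp_sum p x E : (1 < size p)%N -> x != 0 -> (size x <= E)%N ->
  valp p x = (\sum_(1 <= e < E) ((p ^+ e %| x)%R : nat))%N.
Proof.
move=> size_p x0 le_x_E.
rewrite (eq_bigr (fun e => (e <= valp p x : nat))) => [|e _]; last first.
  by rewrite dvdp_exp_valp.
rewrite sum_indicator_leq //; apply: leq_trans le_x_E.
have [v [y ey npy]] := exp_mul_decomp size_p x0.
have y0 : y != 0 by apply: contraNneq npy => ->; rewrite dvdp0.
by rewrite ey valp_exp_mul // size_exp_mul_gt.
Qed.

Lemma valpM p x y : irreducible_poly p -> x != 0 -> y != 0 ->
  valp p (x * y) = (valp p x + valp p y)%N.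
Proof.
move=> p_irr x0 y0; have size_p : (1 < size p)%N by case: p_irr.
have [n [x' -> npx]] := exp_mul_decomp size_p x0.
have [m [y' -> npy]] := exp_mul_decomp size_p y0.
rewrite mulrACA -exprD !valp_exp_mul // Gauss_dvdpr //.
by rewrite irreducible_poly_coprime.
Qed.

Lemma valp_prod p (I : finType) (G : I -> {poly F}) :
  irreducible_poly p -> (forall i, G i != 0) ->
  valp p (\prod_i G i) = (\sum_i valp p (G i))%N.
Proof.
move=> p_irr G0; elim: (index_enum I) => [|i r IH].
  by rewrite !big_nil /valp size_poly1 big_geq.
rewrite !big_cons valpM ?IH // prodf_seq_neq0.
by elim: r {IH} => //= j r ->; rewrite G0.
Qed.

Lemma size_prod_factor_leq (I : finType) (G : I -> {poly F}) j :
  \prod_i G i != 0 -> (size (G j) <= size (\prod_i G i)%R)%N.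
Proof. by move=> G0; apply: dvdp_leq G0 _; rewrite (bigD1 j) //= dvdp_mulr. Qed.

Lemma irreducible_dvdp_exists u : (1 < size u)%N ->
  exists2 p, irreducible_poly p & p %| u.
Proof.
elim: {u}(size u) {-2}u (leqnn (size u)) => [|n IH] u size_u; first by case: (size u) size_u.
move=> u_nc; have [u_irr|u_red] := classic (irreducible_poly u); first by exists u.
have [v v_nc /andP[vu nvu]] : exists2 v : {poly F}, size v != 1%N & (v %| u) && ~~ (v %= u).
  apply: NNPP => no_v; apply: u_red; split=> // v v_nc vu.
  by apply/negPn/negP => nvu; apply: no_v; exists v => //; apply/andP.
have u0 : u != 0 by rewrite -size_poly_gt0 ltnW.
have v0 : v != 0 by apply: contraTneq vu => ->; rewrite dvd0p.
have lt_vu : (size v < size u)%N.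
  rewrite ltn_neqAle dvdp_leq // andbT; apply: contraNneq nvu => eq_size.
  by rewrite -dvdp_size_eqp // eq_size.
have [||p p_irr pv] := IH v.
- by rewrite -ltnS (leq_trans lt_vu).
- by rewrite ltn_neqAle eq_sym v_nc size_poly_gt0.
by exists p => //; apply: dvdp_trans vu.
Qed.

Lemma dvdp_exp_irreducible u w : u != 0 -> w != 0 ->
  (forall p, irreducible_poly p -> forall n, p ^+ n %| u -> p ^+ n %| w) -> u %| w.
Proof.
elim: {u}(size u) {-2}u (leqnn (size u)) w => [|n IH] u size_u w u0 w0 hpow.
  by move: size_u; rewrite leqn0 size_poly_eq0 (negPf u0).
have [|u_nc] := leqP (size u) 1.
  rewrite leq_eqVlt ltnS leqn0 size_poly_eq0 (negPf u0) orbF -dvdp1.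
  by move/dvdp_trans; apply; rewrite dvd1p.
have [p p_irr pu] := irreducible_dvdp_exists u_nc.
have p0 := irredp_neq0 p_irr.
have pw : p %| w by have := hpow p p_irr 1%N; rewrite expr1; apply.
rewrite -(divpK pu) -(divpK pw) dvdp_mul2r //.
have u'0 : u %/ p != 0 by apply: contraNneq u0 => eq0; rewrite -(divpK pu) eq0 mul0r.
have w'0 : w %/ p != 0 by apply: contraNneq w0 => eq0; rewrite -(divpK pw) eq0 mul0r.
apply: IH => //.
  by rewrite -ltnS (leq_trans _ size_u) // size_divp_lt //; case: p_irr.
move=> r r_irr k rk.
have [crp|ncrp] := boolP (coprimep r p).
  by rewrite -(Gauss_dvdpl _ (coprimep_expl k crp)) divpK // hpow // (dvdp_trans rk) ?divp_dvd.
have rp : r %| p by move: ncrp; rewrite irreducible_poly_coprime // negbK.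
have erp : r %= p by apply: apply_irredp => //; case: r_irr => /gtn_eqF ->.
have r0 := irredp_neq0 r_irr.
have rkw : r ^+ k.+1 %| w %/ p * p.
  rewrite divpK // hpow // -(divpK pu) exprSr.
  by rewrite -(eqp_dvdr _ (eqp_mull _ erp)) dvdp_mul2r.
by move: rkw; rewrite exprSr -(eqp_dvdr _ (eqp_mull _ erp)) dvdp_mul2r.
Qed.

End Valuation.

Section NewtonBasis.
Variables (R : comRingType) (r : nat).
Implicit Types (B : nat -> R -> R) (nodes : nat -> R) (L : seq ({ffun 'I_r -> nat} * R)).

Definition newton_basis B nodes :=
  (forall x, B 0%N x = 1) /\ (forall n x, B n.+1 x = (x - nodes n) * B n x).

Definition eval_in B L (x : 'I_r -> R) : R :=
  \sum_(m <- L) m.2 * \prod_(i < r) B (m.1 i) (x i).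

Definition spanned B (phi : ('I_r -> R) -> R) := exists L, forall x, phi x = eval_in B L x.

Variables (B : nat -> R -> R) (nodes : nat -> R).
Hypothesis B_newton : newton_basis B nodes.

Lemma spanned_ext phi psi : spanned B phi -> phi =1 psi -> spanned B psi.
Proof. by move=> [L phiE] eq_phi; exists L => x; rewrite -eq_phi. Qed.

Lemma spanned_cst c : spanned B (fun _ => c).
Proof.
exists [:: ([ffun _ => 0%N], c)] => x; rewrite /eval_in big_seq1 /=.
by rewrite big1 ?mulr1 // => i _; rewrite ffunE B_newton.1.
Qed.

Lemma spanned_add phi psi :
  spanned B phi -> spanned B psi -> spanned B (fun x => phi x + psi x).
Proof.
by move=> [L1 phiE] [L2 psiE]; exists (L1 ++ L2) => x; rewrite phiE psiE /eval_in big_cat.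
Qed.

Lemma spanned_sum (I : Type) (l : seq I) (Q : pred I) (phi : I -> ('I_r -> R) -> R) :
  (forall k, spanned B (phi k)) -> spanned B (fun x => \sum_(k <- l | Q k) phi k x).
Proof.
move=> phi_span; elim: l => [|k l IH].
  by apply: spanned_ext (spanned_cst 0) _ => x; rewrite big_nil.
have [Qk|nQk] := boolP (Q k).
  by apply: spanned_ext (spanned_add (phi_span k) IH) _ => x; rewrite big_cons Qk.
by apply: spanned_ext IH _ => x; rewrite big_cons (negPf nQk).
Qed.

(* [x_i B_n(x_i) = B_(n+1)(x_i) + nodes_n B_n(x_i)] shifts one exponent up. *)
Lemma spanned_mulx (i : 'I_r) phi : spanned B phi -> spanned B (fun x => x i * phi x).
Proof.
pose incr (n : {ffun 'I_r -> nat}) : {ffun 'I_r -> nat} :=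
  [ffun j => if j == i then (n j).+1 else n j].
move=> [L phiE].
exists (flatten [seq [:: (incr m.1, m.2); (m.1, nodes (m.1 i) * m.2)] | m <- L]).
move=> x; rewrite phiE /eval_in big_flatten big_map mulr_sumr; apply: eq_bigr => m _ /=.
rewrite big_cons big_seq1 /= (bigD1 i) //= [\prod_(j < r) B (incr m.1 j) (x j)](bigD1 i) //=.
rewrite ffunE eqxx B_newton.2.
have -> : \prod_(j < r | j != i) B (incr m.1 j) (x j) = \prod_(j < r | j != i) B (m.1 j) (x j).
  by apply: eq_bigr => j /negPf ji; rewrite ffunE ji.
ring.
Qed.

Lemma spanned_newton_term B' nodes' (n : {ffun 'I_r -> nat}) c :
  newton_basis B' nodes' -> spanned B (fun x => c * \prod_(i < r) B' (n i) (x i)).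
Proof.
case=> B'0 B'S.
suff term_span (l : seq 'I_r) c' : spanned B (fun x => c' * \prod_(i <- l) B' (n i) (x i)).
  exact: term_span.
elim: l c' => [|i l IH] c'.
  by apply: spanned_ext (spanned_cst c') _ => x; rewrite big_nil mulr1.
suff factor_span e c'' :
    spanned B (fun x => c'' * (B' e (x i) * \prod_(j <- l) B' (n j) (x j))).
  by apply: spanned_ext (factor_span (n i) c') _ => x; rewrite big_cons.
elim: e c'' => [|e IHe] c''.
  by apply: spanned_ext (IH c'') _ => x; rewrite B'0 mul1r.
apply: spanned_ext (spanned_add (spanned_mulx i (IHe c'')) (IHe (- (c'' * nodes' e)))) _.
by move=> x /=; rewrite B'S; ring.
Qed.

Lemma spanned_eval_in B' nodes' L : newton_basis B' nodes' -> spanned B (eval_in B' L).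
Proof.
move=> B'_newton.
apply: (@spanned_sum _ L xpredT (fun m x => m.2 * \prod_(i < r) B' (m.1 i) (x i))) => m.
exact: spanned_newton_term B'_newton.
Qed.

End NewtonBasis.

Lemma monomial_newton_basis (R : comRingType) :
  newton_basis (fun n (x : R) => x ^+ n) (fun _ => 0).
Proof. by split=> [x|n x]; rewrite ?expr0 // subr0 exprS. Qed.

Section DigitEnumeration.
Variables (F : finFieldType) (s : seq F).
Hypothesis s_enum : good_enum s.
Local Notation q := #|F|.
Local Notation a := (aq s).

Fact q_gt1 : (1 < q)%N. Proof. exact: card_finNzRing_gt1. Qed.
Fact q_gt0 : (0 < q)%N. Proof. exact: ltnW q_gt1. Qed.

Lemma nth_enum0 : s`_0 = 0. Proof. by case: s_enum. Qed.

Lemma mem_enum_all (x : F) : x \in s.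
Proof.
case: s_enum => size_s uniq_s _.
have [|_ ->] := uniq_min_size uniq_s (fun y (_ : y \in s) => mem_enum F y).
  by rewrite -cardE size_s.
by rewrite mem_enum.
Qed.

Lemma aq0 : a 0 = 0.
Proof. by rewrite /aq big_ord1 div0n mod0n nth_enum0 mul0r. Qed.

Lemma aq_widen k N : (k <= N)%N ->
  a k = \sum_(i < N.+1) (s`_((k %/ q ^ i) %% q))%:P * 'X^i.
Proof.
move=> le_k_N; rewrite /aq.
rewrite (big_ord_widen _ (fun i => (s`_((k %/ q ^ i) %% q))%:P * 'X^i) (le_k_N : k < N.+1)%N).
rewrite big_mkcond /=; apply: eq_bigr => i _; case: ltnP => // lt_k_i.
rewrite divn_small ?mod0n ?nth_enum0 ?mul0r //.
exact: leq_trans lt_k_i (ltnW (ltn_expl _ q_gt1)).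
Qed.

Lemma aq_edivn k : a k = (s`_(k %% q))%:P + 'X * a (k %/ q).
Proof.
case: k => [|k]; first by rewrite mod0n div0n aq0 nth_enum0 mulr0 addr0 polyC0.
rewrite {1}/aq big_ord_recl expn0 divn1 expr0 mulr1; congr (_ + _).
rewrite (@aq_widen _ k); last by rewrite -ltnS ltn_Pdiv ?q_gt1.
rewrite mulr_sumr; apply: eq_bigr => i _.
by rewrite /bump /= ?add1n expnS divnMA exprS mulrCA.
Qed.

Lemma aq_shift Q n R : (R < q ^ n)%N -> a (Q * q ^ n + R) = 'X^n * a Q + a R.
Proof.
elim: n R => [|n IH] R.
  by rewrite expn0 ltnS leqn0 => /eqP ->; rewrite muln1 addn0 aq0 addr0 expr0 mul1r.
move=> ltRq; rewrite aq_edivn [a R]aq_edivn expnSr mulnA modnMDl divnMDl ?q_gt0 //.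
rewrite IH ?ltn_divLR ?q_gt0 -?expnSr //.
by rewrite mulrDr addrCA exprS mulrA.
Qed.

Lemma size_aq n k : (k < q ^ n)%N -> (size (a k) <= n)%N.
Proof.
elim: n k => [|n IH] k.
  by rewrite expn0 ltnS leqn0 => /eqP ->; rewrite aq0 size_poly0.
move=> ltkq; rewrite aq_edivn; apply: leq_trans (size_polyD _ _) _.
rewrite geq_max (leq_trans (size_polyC_leq1 _)) //=.
have [->|nz] := eqVneq (a (k %/ q)) 0; first by rewrite mulr0 size_poly0.
by rewrite mulrC size_mulX // ltnS IH // ltn_divLR ?q_gt0 // -expnSr.
Qed.

Lemma coef0_aq k : (a k)`_0 = s`_(k %% q).
Proof. by rewrite aq_edivn coefD coefC coefXM /= addr0. Qed.

Lemma aq_inj : injective a.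
Proof.
suff aq_inj_lt n k k' : (k < n)%N -> (k' < n)%N -> a k = a k' -> k = k'.
  by move=> k k'; apply: (aq_inj_lt (maxn k k').+1); rewrite ltnS ?leq_maxl ?leq_maxr.
elim: n k k' => [//|n IH] k k' ltkn ltk'n eq_a.
case: s_enum => size_s uniq_s _.
have eq_mod : (k %% q = k' %% q)%N.
  apply/eqP; rewrite -(nth_uniq 0 _ _ uniq_s) ?size_s ?ltn_mod ?q_gt0 //.
  by rewrite -!coef0_aq eq_a.
have eq_div : a (k %/ q) = a (k' %/ q).
  move: eq_a; rewrite (aq_edivn k) (aq_edivn k') eq_mod => /addrI.
  by move/mulfI; apply; rewrite polyX_eq0.
have [n0|n_gt0] := posnP n.
  by move: ltkn ltk'n; rewrite n0 !ltnS !leqn0 => /eqP-> /eqP->.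
have ltdiv x : (x < n.+1)%N -> (x %/ q < n)%N.
  case: x => [|x] ltx; first by rewrite div0n.
  exact: leq_trans (ltn_Pdiv q_gt1 (ltn0Sn _)) _.
by rewrite (divn_eq k q) (divn_eq k' q) eq_mod (IH _ _ (ltdiv _ ltkn) (ltdiv _ ltk'n) eq_div).
Qed.

Lemma aq_onto n (p : {poly F}) : (size p <= n)%N ->
  exists2 k, (k < q ^ n)%N & a k = p.
Proof.
elim: n p => [|n IH] p.
  by rewrite leqn0 size_poly_eq0 => /eqP ->; exists 0%N; rewrite ?aq0.
move=> size_p.
have p_shift : p = Poly (behead p) * 'X + (p`_0)%:P.
  apply/polyP=> i; rewrite coefD coefMX coefC coef_Poly.
  by case: i => [|i] /=; rewrite ?addr0 ?add0r // nth_behead.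
have [|k' ltk' ek'] := IH (Poly (behead p)).
  by apply: leq_trans (size_Poly _) _; rewrite size_behead -subn1 leq_subLR add1n.
set i := index p`_0 s.
have lt_i : (i < q)%N by case: s_enum => <- _ _; rewrite index_mem mem_enum_all.
exists (k' * q + i)%N.
  rewrite expnSr; apply: leq_trans (_ : k'.+1 * q <= _)%N.
    by rewrite mulSn [(q + _)%N]addnC ltn_add2l.
  by rewrite leq_mul2r ltk' orbT.
rewrite aq_edivn modnMDl modn_small // divnMDl ?q_gt0 // divn_small // addn0.
by rewrite ek' nth_index ?mem_enum_all // mulrC addrC -p_shift.
Qed.

Lemma aq_dvdp_sub_inj (m : {poly F}) R1 R2 : m != 0 ->
  (R1 < q ^ (size m).-1)%N -> (R2 < q ^ (size m).-1)%N ->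
  m %| a R1 - a R2 -> R1 = R2.
Proof.
move=> m0 ltR1 ltR2 dvd_m; apply: aq_inj.
have lt_size : (size (a R1 - a R2)%R < size m)%N.
  have m_pos : (0 < size m)%N by rewrite size_poly_gt0.
  rewrite -(prednK m_pos) ltnS; apply: leq_trans (size_polyD _ _) _.
  by rewrite size_polyN geq_max !size_aq.
apply/eqP; rewrite -subr_eq0; apply: contraLR lt_size => nz.
by rewrite -leqNgt dvdp_leq.
Qed.

Definition ncongr (m b : {poly F}) k : nat := (\sum_(j < k) ((m %| b - a j)%R : nat))%N.

Section Blocks.
Variable m : {poly F}.
Hypothesis m_neq0 : m != 0.
Local Notation n := (size m).-1.
Local Notation N := (q ^ n)%N.

(* The [a_j] with [j] in a block [Q N <= j < (Q + 1) N] are [X^(deg m) a_Q]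
   plus all residues of degree [< deg m]: a complete residue system mod [m]. *)
Lemma block_congr_once b Q : (\sum_(R < N) ((m %| b - a (Q * N + R))%R : nat))%N = 1%N.
Proof.
set c := b - 'X^n * a Q.
have [|R0 ltR0 eR0] := aq_onto (_ : size (c %% m)%R <= n)%N.
  by rewrite -ltnS prednK ?size_poly_gt0 // ltn_modp.
have congr_R R : (R < N)%N -> (m %| b - a (Q * N + R)) = (R == R0).
  move=> ltR; rewrite aq_shift // opprD addrA -/c.
  apply/idP/eqP => [dvd_R|->]; last by rewrite eR0 {1}(divp_eq c m) addrK dvdp_mull.
  apply: (aq_dvdp_sub_inj m_neq0) => //; rewrite eR0.
  have -> : a R - c %% m = (c - c %% m) - (c - a R) by ring.
  apply: dvdp_sub dvd_R.
  by rewrite {1}(divp_eq c m) addrK dvdp_mull.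
rewrite (bigD1 (Ordinal ltR0)) //= congr_R // eqxx big1 // => R neR.
by rewrite congr_R //; apply/eqP; rewrite eqb0; exact: neR.
Qed.

Lemma ncongr_block b Q : ncongr m b (Q * N) = Q.
Proof.
rewrite /ncongr (sum_nat_blocks (fun j => ((m %| b - a j)%R : nat))).
rewrite (eq_bigr (fun _ => 1%N)) => [|Q' _]; last exact: block_congr_once.
by rewrite sum_nat_const card_ord muln1.
Qed.

Lemma ncongr_ge b k : (k %/ N <= ncongr m b k)%N.
Proof.
rewrite -[X in (X <= _)%N](ncongr_block b) /ncongr.
rewrite (big_ord_widen _ (fun j => ((m %| b - a j)%R : nat)) (leq_trunc_div k N)).
by rewrite [X in (_ <= X)%N](bigID (fun j : 'I_k => (j < k %/ N * N)%N)) leq_addr.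
Qed.

Lemma ncongr_aq k : ncongr m (a k) k = (k %/ N)%N.
Proof.
set Q := (k %/ N)%N; set R0 := (k %% N)%N.
have ltR0 : (R0 < N)%N by rewrite ltn_mod expn_gt0 q_gt0.
have ek : k = (Q * N + R0)%N by rewrite /Q /R0 -divn_eq.
rewrite {2}ek /ncongr big_split_ord /= -/(ncongr _ _ _) ncongr_block.
rewrite big1 ?addn0 // => R _; apply/eqP; rewrite eqb0.
have ltR : (R < N)%N := ltn_trans (ltn_ord R) ltR0.
rewrite ek !aq_shift // [X in _ %| X](_ : _ = a R0 - a R); last by ring.
apply/negP => /(aq_dvdp_sub_inj m_neq0 ltR0 ltR) eqR.
by move: (ltn_ord R); rewrite -eqR ltnn.
Qed.

End Blocks.

End DigitEnumeration.

Section FallingProduct.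
Variables (F : finFieldType) (s : seq F).
Hypothesis s_enum : good_enum s.
Local Notation q := #|F|.
Local Notation a := (aq s).

Definition falling n (x : {poly F}) : {poly F} := \prod_(j < n) (x - a j).

Lemma falling_newton_basis : newton_basis falling a.
Proof. by split=> [x|n x]; rewrite /falling ?big_ord0 // big_ord_recr mulrC. Qed.

Lemma falling_dvdp_leq m n x : (m <= n)%N -> falling m x %| falling n x.
Proof.
move=> le_mn; rewrite /falling -!(big_mkord xpredT (fun j => x - a j)).
by rewrite (big_cat_nat (leq0n m) le_mn) /= dvdp_mulr.
Qed.

Lemma aq_sub_neq0 k (j : 'I_k) : a k - a j != 0.
Proof.
rewrite subr_eq0; apply: contraTneq (ltn_ord j) => /(aq_inj s_enum) <-.
by rewrite ltnn.
Qed.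

(* Bhargava's counting: for every modulus [m], at most as many [a_j] ([j < k])
   are congruent to [a_k] as to any [b], so every prime power dividing the
   left-hand side divides the right-hand side. *)
Lemma fallprod_dvdp_falling k b : fallprod s k %| falling k b.
Proof.
have [->|falling0] := eqVneq (falling k b) 0; first exact: dvdp0.
have fallprod0 : fallprod s k != 0 by apply/prodf_neq0 => j _; exact: aq_sub_neq0.
apply: dvdp_exp_irreducible => // p p_irr n.
have size_p : (1 < size p)%N by case: p_irr.
have pe0 e : p ^+ e != 0 by rewrite expf_neq0 // irredp_neq0.
rewrite !dvdp_exp_valp // => /leq_trans; apply.
set E := (size (fallprod s k) + size (falling k b))%N.
have b_sub0 (j : 'I_k) : b - a j != 0 by move/prodf_neq0: falling0; apply.
have valp_fallprod (j : 'I_k) :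
    valp p (a k - a j) = (\sum_(1 <= e < E) ((p ^+ e %| a k - a j)%R : nat))%N.
  apply: valp_sum; rewrite ?aq_sub_neq0 //.
  exact: leq_trans (size_prod_factor_leq _ fallprod0) (leq_addr _ _).
have valp_falling (j : 'I_k) :
    valp p (b - a j) = (\sum_(1 <= e < E) ((p ^+ e %| b - a j)%R : nat))%N.
  apply: valp_sum; rewrite ?b_sub0 //.
  exact: leq_trans (size_prod_factor_leq _ falling0) (leq_addl _ _).
rewrite /fallprod /falling !valp_prod //; last exact: aq_sub_neq0.
rewrite (eq_bigr _ (fun j _ => valp_fallprod j)) (eq_bigr _ (fun j _ => valp_falling j)).
rewrite exchange_big [X in (_ <= X)%N]exchange_big.
apply: leq_sum => e _; have := ncongr_ge s_enum (pe0 e) b k.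
by rewrite -(ncongr_aq s_enum (pe0 e) k); exact: id.
Qed.

Lemma dvdp_fallprod_lambda (g : {poly F}) : (1 < size g)%N -> g %| fallprod s (lambda s g).
Proof.
move=> size_g; have g0 : g != 0 by rewrite -size_poly_gt0 ltnW.
set n := (size g).-1; set k := (q ^ n)%N.
have k_gt0 : (0 < k)%N by rewrite expn_gt0 q_gt0.
have lam_k : lam_prop s g k.
  have [|j ltjk eq_j] := aq_onto s_enum (_ : size (a k %% g)%R <= n)%N.
    by rewrite -ltnS prednK ?size_poly_gt0 // ltn_modp.
  rewrite /lam_prop k_gt0 /fallprod (bigD1 (Ordinal ltjk)) //= dvdp_mulr // eq_j.
  by rewrite {1}(divp_eq (a k) g) addrK dvdp_mull.
have has_lam : has (lam_prop s g) (iota 1 (q ^ size g)).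
  apply/hasP; exists k => //; rewrite mem_iota k_gt0 add1n ltnS.
  by rewrite leq_pexp2l ?q_gt0 // leq_pred.
have lt_find : (find (lam_prop s g) (iota 1 (q ^ size g)) < q ^ size g)%N.
  by move: has_lam; rewrite has_find size_iota.
by have := nth_find 0%N has_lam; rewrite nth_iota // add1n => /andP[].
Qed.

Lemma dvdp_falling_mu (fi g b : {poly F}) n : (1 < size g)%N -> (size b < size fi)%N ->
  (mu s fi g <= n)%N -> g %| falling n b.
Proof.
move=> size_g size_b; rewrite geq_min => /orP[le_q_n|le_lam_n].
  have [|j ltj eq_j] := aq_onto s_enum (_ : size b <= (size fi).-1)%N.
    by rewrite -ltnS prednK // (leq_ltn_trans _ size_b).
  rewrite /falling (bigD1 (Ordinal (leq_trans ltj le_q_n))) //= eq_j subrr mul0r.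
  exact: dvdp0.
apply: dvdp_trans (dvdp_fallprod_lambda size_g) _.
exact: dvdp_trans (fallprod_dvdp_falling _ b) (falling_dvdp_leq _ le_lam_n).
Qed.

End FallingProduct.

Definition totup (R : nzRingType) n (p : {poly R}) : n.-tuple R := [tuple p`_j | j < n].

Lemma Poly_totup (R : nzRingType) n (p : {poly R}) : (size p <= n)%N -> Poly (totup n p) = p.
Proof.
move=> size_p; apply/polyP => i; rewrite coef_Poly.
have [lt_in|le_ni] := ltnP i n; first by rewrite -[i]/(nat_of_ord (Ordinal lt_in)) nth_mktuple.
by rewrite nth_default ?size_tuple // nth_default // (leq_trans size_p).
Qed.

Lemma Poly_tuple_inj (R : nzRingType) n : injective (fun t : n.-tuple R => Poly t).
Proof.
move=> t1 t2 eq_t; apply: eq_from_tnth => j; rewrite !(tnth_nth 0).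
by have := congr1 (fun p : {poly R} => p`_j) eq_t; rewrite /= !coef_Poly.
Qed.

Section Counting.
Variables (F : finFieldType) (s : seq F).
Hypothesis s_enum : good_enum s.
Variables (r : nat) (f : 'I_r -> {poly F}) (g : {poly F}).
Hypothesis f_nc : forall i, (1 < size (f i))%N.
Hypothesis g_nc : (1 < size g)%N.
Local Notation q := #|F|.
Local Notation a := (aq s).
Local Notation P := {poly F}.
Local Notation M := (\max_(i < r) mu s (f i) g).
Local Notation exps := {ffun 'I_r -> 'I_M}.

Definition valid (k : exps) : bool := [forall i, (k i < mu s (f i) g)%N].
Definition dk (k : exps) : P := \prod_(i < r) fallprod s (k i).
Definition gk (k : exps) : P := g %/ gcdp g (dk k).
Definition in_box (b : 'I_r -> P) := forall i, (size (b i) < size (f i))%N.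

Definition newton_sum (c : exps -> P) (b : 'I_r -> P) : P :=
  \sum_(k | valid k) c k * \prod_(i < r) falling s (k i) (b i).

Lemma g_neq0 : g != 0.
Proof. by rewrite -size_poly_gt0 ltnW. Qed.

Lemma gk_mul_gcdp k : gk k * gcdp g (dk k) = g.
Proof. by rewrite divpK // dvdp_gcdl. Qed.

Lemma gk_neq0 k : gk k != 0.
Proof. by apply: contraNneq g_neq0 => gk0; rewrite -(gk_mul_gcdp k) gk0 mul0r. Qed.

Lemma size_gk k : (size (gk k) <= size g)%N.
Proof. by apply: dvdp_leq g_neq0 _; rewrite -(gk_mul_gcdp k) dvdp_mulr. Qed.

Lemma dk_dvdp_falling k b : dk k %| \prod_(i < r) falling s (k i) (b i).
Proof.
apply: (big_ind2 (fun x y => x %| y)) => [|x1 x2 y1 y2|i _]; first exact: dvd1p.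
  exact: dvdp_mul.
exact: fallprod_dvdp_falling.
Qed.

Lemma newton_sum_ext c1 c2 b : (forall k, valid k -> c1 k = c2 k) ->
  newton_sum c1 b = newton_sum c2 b.
Proof. by move=> eq_c; apply: eq_bigr => k /eq_c ->. Qed.

Lemma newton_sum_bext c b1 b2 : b1 =1 b2 -> newton_sum c b1 = newton_sum c b2.
Proof.
by move=> eq_b; apply: eq_bigr => k _; congr (_ * _); apply: eq_bigr => i _; rewrite eq_b.
Qed.

Lemma newton_sumD c1 c2 b :
  newton_sum (fun k => c1 k + c2 k) b = newton_sum c1 b + newton_sum c2 b.
Proof. by rewrite /newton_sum -big_split; apply: eq_bigr => k _; rewrite mulrDl. Qed.

Lemma newton_sumB c1 c2 b :
  newton_sum (fun k => c1 k - c2 k) b = newton_sum c1 b - newton_sum c2 b.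
Proof. by rewrite /newton_sum -sumrB; apply: eq_bigr => k _; rewrite mulrBl. Qed.

Lemma newton_sum0 b : newton_sum (fun _ => 0) b = 0.
Proof. by rewrite /newton_sum big1 // => k _; rewrite mul0r. Qed.

(* Since [gcdp g (dk k)] divides every value of the [k]-th product, only the
   residue of [c k] modulo [gk k] matters. *)
Lemma newton_sum_modp_gk c b :
  newton_sum c b %% g = newton_sum (fun k => c k %% gk k) b %% g.
Proof.
apply: modp_eq_dvdp; rewrite /newton_sum -sumrB.
apply: (big_ind (fun x => g %| x)) => [|x y|k _]; [exact: dvdp0 | exact: dvdp_add |].
rewrite -mulrBl {1}(divp_eq (c k) (gk k)) addrK -mulrA dvdp_mull //.
rewrite -{1}(gk_mul_gcdp k) dvdp_mul //.
exact: dvdp_trans (dvdp_gcdr _ _) (dk_dvdp_falling k b).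
Qed.

Definition exps_nat (k : exps) : {ffun 'I_r -> nat} := [ffun i => nat_of_ord (k i)].

Lemma exps_nat_inj : injective exps_nat.
Proof.
move=> k1 k2 eq_k; apply/ffunP => i; apply: val_inj.
by have := congr1 (fun n : {ffun 'I_r -> nat} => n i) eq_k; rewrite /= !ffunE.
Qed.

(* Products with some exponent [n i >= mu] vanish on the box modulo [g]. *)
Lemma newton_term_modp (n : {ffun 'I_r -> nat}) c b : in_box b ->
  (c * \prod_(i < r) falling s (n i) (b i)) %% g
  = newton_sum (fun k => if n == exps_nat k then c else 0) b %% g.
Proof.
move=> b_box; have [/forallP n_lt|] := boolP [forall i, (n i < mu s (f i) g)%N].
  pose k0 : exps := [ffun i => Ordinal (leq_trans (n_lt i) (leq_bigmax i))].
  have k0E : exps_nat k0 = n by apply/ffunP => i; rewrite !ffunE.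
  have k0_valid : valid k0 by apply/forallP => i; rewrite ffunE n_lt.
  rewrite /newton_sum (bigD1 k0) //= -k0E eqxx [X in _ = (_ + X) %% g]big1 ?addr0; last first.
    by move=> k /andP[_ nk]; rewrite (inj_eq exps_nat_inj) eq_sym (negPf nk) mul0r.
  by congr (_ %% _); congr (_ * _); apply: eq_bigr => i _; rewrite ffunE.
rewrite negb_forall => /existsP [i]; rewrite -leqNgt => mu_le_n.
rewrite (newton_sum_ext (c2 := fun _ => 0)) ?newton_sum0 ?mod0p; last first.
  move=> k /forallP /(_ i) lt_k; case: eqP => // eq_n.
  by move: mu_le_n; rewrite eq_n ffunE leqNgt lt_k.
apply/modp_eq0P; apply: dvdp_mull; rewrite (bigD1 i) //= dvdp_mulr //.
by move: (dvdp_falling_mu s_enum g_nc (b_box i) mu_le_n).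
Qed.

Definition collect (L : seq ({ffun 'I_r -> nat} * P)) (k : exps) : P :=
  \sum_(m <- L | m.1 == exps_nat k) m.2.

Lemma eval_in_falling_modp L b : in_box b ->
  eval_in (falling s) L b %% g = newton_sum (collect L) b %% g.
Proof.
move=> b_box; elim: L => [|m L IH].
  rewrite /eval_in big_nil (newton_sum_ext (c2 := fun _ => 0)) ?newton_sum0 // => k _.
  by rewrite /collect big_nil.
rewrite /eval_in big_cons -/(eval_in _ L b) modpD IH.
rewrite (newton_sum_ext (c1 := collect (m :: L))
  (c2 := fun k => (if m.1 == exps_nat k then m.2 else 0) + collect L k)).
  by rewrite newton_sumD modpD newton_term_modp.
by move=> k _; rewrite /collect big_cons; case: (_ == _); rewrite ?add0r.
Qed.

Lemma gk_dvdp x k : g %| x * dk k -> gk k %| x.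
Proof.
move=> g_dvd; have h0 : gcdp g (dk k) != 0 by rewrite gcdp_eq0 negb_and g_neq0.
rewrite -(@Gauss_dvdpl _ _ (dk k %/ gcdp g (dk k))); last first.
  by rewrite coprimep_div_gcd // g_neq0.
by rewrite -(dvdp_mul2r _ _ h0) -mulrA !divpK ?dvdp_gcdl ?dvdp_gcdr.
Qed.

(* At the point [(a_(k_i))_i] every [falling_(k'_i)] with [k'_i > k_i] vanishes. *)
Lemma newton_sum_aq (d : exps -> P) k : valid k ->
  (forall k', valid k' -> k' != k -> [forall i, k' i <= k i]%N -> d k' = 0) ->
  newton_sum d (fun i => a (k i)) = d k * dk k.
Proof.
move=> k_valid d_below; rewrite /newton_sum (bigD1 k) //= [X in _ + X]big1 ?addr0 //.
move=> k' /andP[k'_valid nk'].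
have [le_k'|] := boolP [forall i, k' i <= k i]%N; first by rewrite d_below ?mul0r.
rewrite negb_forall => /existsP [i]; rewrite -ltnNge => lt_i.
by rewrite (bigD1 i) //= /falling (bigD1 (Ordinal lt_i)) //= subrr !mul0r mulr0.
Qed.

Lemma aq_in_box k : valid k -> in_box (fun i => a (k i)).
Proof.
move=> /forallP k_valid i; apply: leq_ltn_trans (size_aq s_enum _) _.
  exact: leq_trans (k_valid i) (geq_minl _ _).
by rewrite prednK // ltnW.
Qed.

Lemma newton_sum_eq0 (d : exps -> P) :
  (forall k, valid k -> size (d k) < size (gk k))%N ->
  (forall b, in_box b -> newton_sum d b %% g = 0) -> forall k, valid k -> d k = 0.
Proof.
move=> d_red d_van.
suff d0 n k : valid k -> (\sum_i (k i : nat) < n)%N -> d k = 0 by move=> k /d0; apply.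
elim: n k => [//|n IH] k k_valid; rewrite ltnS => le_n.
have : g %| d k * dk k.
  rewrite -newton_sum_aq // => [|k' k'_valid nk' /forallP le_k'].
    exact/modp_eq0P/d_van/aq_in_box.
  apply: IH k'_valid (leq_trans _ le_n).
  have [i ne_i] : exists i, k' i != k i.
    apply/existsP; apply: contraNT nk' => /existsPn eq_k'.
    by apply/eqP/ffunP => i; apply/val_inj/eqP; rewrite -[_ == _]negbK eq_k'.
  by have := sum_nat_lt (i0 := i) le_k'; apply; rewrite ltn_neqAle ne_i le_k'.
move/gk_dvdp => gk_d; apply/eqP; apply: contraT => nz.
by have := dvdp_leq nz gk_d; rewrite leqNgt d_red.
Qed.

Lemma dpt_in_box (x : Dom f) : in_box (dpt x).
Proof. by move=> i; have /forallP := valP x; apply. Qed.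

Lemma in_box_dpt b : in_box b -> exists x : Dom f, dpt x =1 b.
Proof.
move=> b_box; have size_b i : (size (b i) <= mx f)%N.
  exact: leq_trans (ltnW (b_box i)) (leq_bigmax i).
have b_dom : in_dom [ffun i => totup (mx f) (b i)].
  by apply/forallP => i; rewrite ffunE Poly_totup.
by exists (exist (fun b => @in_dom F r f b) _ b_dom) => i; rewrite /dpt /= ffunE Poly_totup.
Qed.

Definition polyfun_of (c : exps -> P) : FunT f g :=
  [ffun x => totup (size g).-1 (newton_sum c (dpt x) %% g)].

Lemma Poly_polyfun_of c x : Poly (polyfun_of c x) = newton_sum c (dpt x) %% g.
Proof.
by rewrite ffunE Poly_totup // -ltnS prednK ?ltn_modp ?g_neq0 // ltnW.
Qed.

Lemma polyfun_of_ext c1 c2 : (forall k, valid k -> c1 k = c2 k) ->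
  polyfun_of c1 = polyfun_of c2.
Proof. by move=> eq_c; apply/ffunP => x; rewrite !ffunE (newton_sum_ext _ eq_c). Qed.

Lemma polyfun_of_is_polyfun c : is_polyfun (polyfun_of c).
Proof.
have [L newtonE] : spanned (fun n (x : P) => x ^+ n) (newton_sum c).
  apply: (spanned_sum (monomial_newton_basis _) (index_enum exps) valid
    (phi := fun k x => c k * \prod_(i < r) falling s (k i) (x i))) => k.
  apply: spanned_ext (spanned_newton_term (monomial_newton_basis _) (exps_nat k) (c k)
    (falling_newton_basis s)) _.
  by move=> x /=; congr (_ * _); apply: eq_bigr => i _; rewrite ffunE.
by exists L => x; rewrite Poly_polyfun_of newtonE.
Qed.

Lemma is_polyfun_reduced h : is_polyfun h ->
  exists2 c : exps -> P, (forall k, size (c k) < size (gk k))%N & h = polyfun_of c.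
Proof.
move=> [Q hQ].
have [L fallingE] := spanned_eval_in (falling_newton_basis s) Q (monomial_newton_basis _).
exists (fun k => collect L k %% gk k) => [k|]; first by rewrite ltn_modp gk_neq0.
apply/ffunP => x; apply: Poly_tuple_inj; rewrite /= Poly_polyfun_of hQ.
rewrite -newton_sum_modp_gk -eval_in_falling_modp; last exact: dpt_in_box.
by rewrite -fallingE.
Qed.

Lemma polyfun_of_inj (c1 c2 : exps -> P) :
  (forall k, valid k -> size (c1 k) < size (gk k))%N ->
  (forall k, valid k -> size (c2 k) < size (gk k))%N ->
  polyfun_of c1 = polyfun_of c2 -> forall k, valid k -> c1 k = c2 k.
Proof.
move=> c1_red c2_red eq_c k k_valid; apply/eqP; rewrite -subr_eq0; apply/eqP.
apply: (@newton_sum_eq0 (fun k => c1 k - c2 k)) k_valid => [k' k'_valid|b b_box].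
  by apply: leq_ltn_trans (size_polyD _ _) _; rewrite size_polyN gtn_max c1_red ?c2_red.
have [x xE] := in_box_dpt b_box.
by rewrite -(newton_sum_bext _ xE) newton_sumB modpD modpN -!Poly_polyfun_of eq_c subrr.
Qed.

Local Notation N := (size g).-1.

(* Reduced coefficient families, [deg c_k < deg gk_k] for valid [k], stored as
   tables of coefficients supported on [table_supp]. *)
Definition table_supp : {set exps * 'I_N} :=
  [set kj : exps * 'I_N | valid kj.1 && (kj.2 < (size (gk kj.1)).-1)%N].

Definition poly_of_table (c : {ffun exps * 'I_N -> F}) (k : exps) : P :=
  \sum_(j < N) (c (k, j))%:P * 'X^j.

Lemma coef_poly_of_table c k (j : 'I_N) : (poly_of_table c k)`_j = c (k, j).
Proof.
rewrite coef_sum (bigD1 j) //= [X in _ + X]big1 ?addr0 => [|i ne_ij].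
  by rewrite coefCM coefXn eqxx mulr1.
by rewrite coefCM coefXn (inj_eq val_inj) eq_sym (negPf ne_ij) mulr0.
Qed.

Lemma coef_poly_of_table_ge c k j : (N <= j)%N -> (poly_of_table c k)`_j = 0.
Proof.
move=> le_Nj; rewrite coef_sum big1 // => i _; rewrite coefCM coefXn.
by rewrite eqn_leq leqNgt (leq_trans (ltn_ord i) le_Nj) mulr0.
Qed.

Lemma size_poly_of_table c k : c \in pffun_on 0 table_supp predT -> valid k ->
  (size (poly_of_table c k) < size (gk k))%N.
Proof.
case/pffun_onP => /subsetP c_supp _ k_valid.
have gk_pos : (0 < size (gk k))%N by rewrite size_poly_gt0 gk_neq0.
rewrite -[X in (_ < X)%N](prednK gk_pos) ltnS.
apply/leq_sizeP => j le_j; have [lt_jN|] := ltnP j N; last exact: coef_poly_of_table_ge.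
rewrite -[j]/(nat_of_ord (Ordinal lt_jN)) coef_poly_of_table.
apply/eqP; apply: contraTT le_j => nz.
have /c_supp : (k, Ordinal lt_jN) \in support c by rewrite inE.
by rewrite inE /= k_valid -ltnNge; apply.
Qed.

Lemma table_of_reduced (c' : exps -> P) : (forall k, size (c' k) < size (gk k))%N ->
  exists2 c, c \in pffun_on 0 table_supp predT & polyfun_of (poly_of_table c) = polyfun_of c'.
Proof.
move=> c'_red.
have size_c' k : (size (c' k) <= (size (gk k)).-1)%N.
  by rewrite -ltnS prednK ?size_poly_gt0 ?gk_neq0.
exists [ffun kj : exps * 'I_N => if valid kj.1 then (c' kj.1)`_kj.2 else 0].
  apply/pffun_onP; split => //; apply/subsetP => -[k j]; rewrite !inE ffunE /=.
  case: (valid k) => /=; last by rewrite eqxx.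
  apply: contraTT; rewrite -leqNgt negbK => le_j; apply/eqP.
  by move/leq_sizeP: (leq_trans (size_c' k) le_j); apply.
apply: polyfun_of_ext => k k_valid; apply/polyP => j.
have [lt_jN|le_Nj] := ltnP j N.
  by rewrite -[j]/(nat_of_ord (Ordinal lt_jN)) coef_poly_of_table ffunE /= k_valid.
rewrite coef_poly_of_table_ge // nth_default // (leq_trans (size_c' k)) //.
by rewrite (leq_trans _ le_Nj) // -!subn1 leq_sub2r // size_gk.
Qed.

Lemma poly_of_table_inj c1 c2 :
  c1 \in pffun_on 0 table_supp predT -> c2 \in pffun_on 0 table_supp predT ->
  polyfun_of (poly_of_table c1) = polyfun_of (poly_of_table c2) -> c1 = c2.
Proof.
move=> c1_on c2_on /polyfun_of_inj eq_c; apply/ffunP => -[k j].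
have [kj_supp|kj_nsupp] := boolP ((k, j) \in table_supp).
  move: (kj_supp); rewrite inE => /andP[k_valid _].
  by rewrite -!coef_poly_of_table eq_c // => k' k'_valid; exact: size_poly_of_table.
have supp0 c : c \in pffun_on 0 table_supp predT -> c (k, j) = 0.
  case/pffun_onP => /subsetP c_supp _; apply/eqP; apply: contraR kj_nsupp => nz.
  by apply: c_supp; rewrite inE.
by rewrite !supp0.
Qed.

Lemma card_table_supp : #|table_supp| = (\sum_(k | valid k) (size (gk k)).-1)%N.
Proof.
rewrite -sum1_card
  (eq_bigl (fun kj : exps * 'I_N => valid kj.1 && (kj.2 < (size (gk kj.1)).-1)%N)).
  rewrite -(pair_big_dep valid (fun k (j : 'I_N) => (j < (size (gk k)).-1)%N)
    (fun _ _ => 1%N)).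
  apply: eq_bigr => k _; have le_gk_N : ((size (gk k)).-1 <= N)%N.
    by rewrite -!subn1 leq_sub2r // size_gk.
  by rewrite -(big_ord_widen _ (fun _ => 1%N) le_gk_N) sum_nat_const card_ord muln1.
by move=> kj; rewrite inE.
Qed.

Lemma card_polyfun :
  card_is (@is_polyfun F r f g) (\prod_(k | valid k) q ^ (size (gk k)).-1)%N.
Proof.
exists [seq polyfun_of (poly_of_table c) | c <- enum (pffun_on (0 : F) table_supp predT)].
split.
- rewrite map_inj_in_uniq ?enum_uniq // => c1 c2.
  by rewrite !mem_enum; exact: poly_of_table_inj.
- move=> h; split=> [/mapP [c _ ->]|].
    exact: polyfun_of_is_polyfun.
  case/is_polyfun_reduced => c' /table_of_reduced [c c_on <-] ->.
  by apply/mapP; exists c; rewrite ?mem_enum.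
- by rewrite size_map -cardE card_pffun_on card_table_supp expn_sum.
Qed.

End Counting.

Unset Implicit Arguments.

Theorem mainTheorem8 (F : finFieldType) (s : seq F) (r : nat)
  (f : 'I_r -> {poly F}) (g : {poly F}) :
  good_enum s ->
  (forall i, (1 < size (f i))%N) -> (1 < size g)%N ->
  card_is (@is_polyfun F r f g)
    (\prod_(k : {ffun 'I_r -> 'I_(\max_(i < r) mu s (f i) g)}
             | [forall i, (k i < mu s (f i) g)%N])
       #|F| ^ (size ((g %/ gcdp g (\prod_(i < r) fallprod s (k i)))%R)).-1)%N.
Proof. move=> s_enum f_nc g_nc; exact: card_polyfun. Qed.
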